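(* Let $n\ge 4$ and let $q$ be a prime power with $q>\frac{n(n-1)^2(n-2)^2}{4}$. Then there exist pairwise distinct $\alpha_1,\dots,\alpha_n\in\mathbb F_q$ such that for every $\mathbf i=(i_1,i_2,i_3),\mathbf j=(j_1,j_2,j_3)\in S_3(n)$ with $d_H(\mathbf i,\mathbf j)\ge2$ there is no pair $(a,b)\in\mathbb F_q^*\times\mathbb F_q$ with $a\alpha_{i_\ell}+b=\alpha_{j_\ell}$ for all $\ell=1,2,3$.
   Context: $S_3(n)=\{(i_1,i_2,i_3)\in\{1,\dots,n\}^3: i_1<i_2<i_3\}$, and $d_H(\mathbf i,\mathbf j)$ is the number of coordinates in which $\mathbf i$ and $\mathbf j$ differ. *)

From HB Require Import structures.
From mathcomp Require Import all_boot all_order all_algebra.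
Set Implicit Arguments. Unset Strict Implicit. Unset Printing Implicit Defensive.

(* A triple (i_1,i_2,i_3) is encoded as a function 'I_3 -> 'I_n
   (indices 1..n are shifted to 0..n-1). *)

Definition inS3 (n : nat) (i : 'I_3 -> 'I_n) : Prop :=
  forall l1 l2 : 'I_3, l1 < l2 -> i l1 < i l2.

Definition dH (n : nat) (i j : 'I_3 -> 'I_n) : nat :=
  #|[pred l : 'I_3 | i l != j l]|.

From HB Require Import structures.
From mathcomp Require Import all_boot all_order all_algebra.
From mathcomp Require Import zify ring.
Set Implicit Arguments. Unset Strict Implicit.
Import GRing.Theory.

(* Choose alpha_1, alpha_2, ... greedily.  Once alpha_1..alpha_m are fixed, a
   candidate x for alpha_(m+1) only has to avoid the old values and the pairs
   of triples whose last entry is m+1, and each such pair rules out at most one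
   x: an affine map is determined by the images of two distinct points, so x is
   forced by that map when m+1 occurs on one side only, and x is the unique
   fixed point of a non-identity affine map when it occurs on both sides.  This
   excludes at most m + C(m,2)^2 + 2 C(m,2) C(m,3) values, fewer than q. *)

Lemma count_excluded_le m : 2 <= m ->
  4 * (m + 'C(m, 2) * 'C(m, 2) + 'C(m, 2) * 'C(m, 3) + 'C(m, 3) * 'C(m, 2))
    <= m.+1 * m ^ 2 * (m - 1) ^ 2.
Proof.
move=> m_ge2; have := mul_bin_left m 1; have := mul_bin_left m 2.
rewrite bin1; move: 'C(m, 2) 'C(m, 3) => u w.
nia.
Qed.

Lemma count_excluded_lt n m q : 4 <= n -> m < n ->
  n * (n - 1) ^ 2 * (n - 2) ^ 2 < 4 * q ->
  m + 'C(m, 2) * 'C(m, 2) + 'C(m, 2) * 'C(m, 3) + 'C(m, 3) * 'C(m, 2) < q.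
Proof.
move=> n_ge4 lt_mn lt_nq.
have le_n : 4 * 3 ^ 2 * 2 ^ 2 <= n * (n - 1) ^ 2 * (n - 2) ^ 2.
  by rewrite !leq_mul ?leq_sqr //; lia.
have [m_le1 | m_ge2] := leqP m 1.
  by rewrite !bin_small //; lia.
have le_m := count_excluded_le m_ge2.
have : m.+1 * m ^ 2 * (m - 1) ^ 2 <= n * (n - 1) ^ 2 * (n - 2) ^ 2.
  by rewrite !leq_mul ?leq_sqr //; lia.
lia.
Qed.

Lemma card_witnessed_le (T D : finType) (A : {set D}) (P : T -> D -> bool) :
  (forall d x y, d \in A -> P x d -> P y d -> x = y) ->
  #|[set x | [exists d in A, P x d]]| <= #|A|.
Proof.
move=> P_fun; apply: leq_trans (leq_imset_card (fun d => [pick x | P x d]) A).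
rewrite -(card_imset _ Some_inj); apply/subset_leq_card/subsetP => _ /imsetP[x + ->].
rewrite inE => /existsP[d /andP[dA Pxd]]; apply/imsetP; exists d => //.
by case: pickP => [y Pyd | /(_ x)]; [rewrite (P_fun d x y) | rewrite Pxd].
Qed.

Lemma affine_map_unique (R : idomainType) (a b a' b' p1 p2 q1 q2 : R) : p1 != p2 ->
  (a * p1 + b = q1 -> a * p2 + b = q2 ->
   a' * p1 + b' = q1 -> a' * p2 + b' = q2 -> a = a' /\ b = b')%R.
Proof.
move=> p12 e1 e2 e1' e2'.
have : ((a - a') * (p1 - p2) = (a * p1 + b) - (a * p2 + b) - ((a' * p1 + b') - (a' * p2 + b')))%R.
  by ring.
rewrite e1 e2 e1' e2' subrr.
move/eqP; rewrite mulf_eq0 !subr_eq0 (negbTE p12) orbF => /eqP eq_a.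
by split=> //; apply: (addrI (a * p1)%R); rewrite e1 eq_a e1'.
Qed.

Section AffineRelation.
Variable F : finFieldType.
Local Open Scope ring_scope.

Definition affine_related (p1 p2 p3 q1 q2 q3 : F) : bool :=
  [exists a, exists b, [&& a != 0, a * p1 + b == q1, a * p2 + b == q2 & a * p3 + b == q3]].

Lemma affine_relatedP p1 p2 p3 q1 q2 q3 :
  reflect (exists a b, [/\ a != 0, a * p1 + b = q1, a * p2 + b = q2 & a * p3 + b = q3])
          (affine_related p1 p2 p3 q1 q2 q3).
Proof.
apply: (iffP existsP) => [[a /existsP[b /and4P[a0 /eqP e1 /eqP e2 /eqP e3]]] | [a [b [a0 e1 e2 e3]]]].
  by exists a, b.
by exists a; apply/existsP; exists b; rewrite a0 e1 e2 e3 !eqxx.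
Qed.

Lemma affine_related_common p1 p2 p3 q1 q2 q3 p3' q3' : p1 != p2 ->
  affine_related p1 p2 p3 q1 q2 q3 -> affine_related p1 p2 p3' q1 q2 q3' ->
  exists a b, [/\ a != 0, a * p1 + b = q1, a * p3 + b = q3 & a * p3' + b = q3'].
Proof.
move=> p12 /affine_relatedP[a [b [a0 e1 e2 e3]]] /affine_relatedP[a' [b' [_ e1' e2' e3']]].
have [ea eb] := affine_map_unique p12 e1 e2 e1' e2'; subst a' b'.
by exists a, b.
Qed.

Lemma affine_related_fixed_uniq p1 p2 q1 q2 x y : p1 != p2 -> p1 != q1 ->
  affine_related p1 p2 x q1 q2 x -> affine_related p1 p2 y q1 q2 y -> x = y.
Proof.
move=> p12 p1q1 rel_x rel_y.
have [a [b [_ e1 ex ey]]] := affine_related_common p12 rel_x rel_y.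
have a_neq1 : a - 1 != 0.
  apply: contra_neq p1q1 => /eqP; rewrite subr_eq0 => /eqP a1.
  have b0 : b = 0 by move: ex; rewrite a1 mul1r -{2}[x]addr0 => /addrI.
  by rewrite -e1 a1 b0 mul1r addr0.
have : (a - 1) * (x - y) = (a * x + b) - (a * y + b) - (x - y) by ring.
rewrite ex ey subrr.
by move/eqP; rewrite mulf_eq0 (negbTE a_neq1) subr_eq0 => /eqP.
Qed.

Lemma affine_related_src_uniq p1 p2 q1 q2 q3 x y : p1 != p2 ->
  affine_related p1 p2 x q1 q2 q3 -> affine_related p1 p2 y q1 q2 q3 -> x = y.
Proof.
move=> p12 rel_x rel_y.
have [a [b [a0 _ ex ey]]] := affine_related_common p12 rel_x rel_y.
by apply: (mulfI a0); apply: (addIr b); rewrite ex ey.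
Qed.

Lemma affine_related_dst_uniq p1 p2 p3 q1 q2 x y : p1 != p2 ->
  affine_related p1 p2 p3 q1 q2 x -> affine_related p1 p2 p3 q1 q2 y -> x = y.
Proof.
move=> p12 rel_x rel_y.
by have [a [b [_ _ <- <-]]] := affine_related_common p12 rel_x rel_y.
Qed.

End AffineRelation.

Definition increasing_tuples m k := [set t : k.-tuple 'I_m | sorted ltn (map val t)].

Lemma card_increasing_tuples m k : #|increasing_tuples m k| = 'C(m, k).
Proof. exact: card_ltn_sorted_tuples. Qed.

Section GreedyExtension.
Variable F : finFieldType.

Definition admissible (m : nat) (f : nat -> F) : Prop :=
  (forall k l, k < m -> l < m -> f k = f l -> k = l) /\
  forall i1 i2 i3 j1 j2 j3, i1 < i2 < i3 -> i3 < m -> j1 < j2 < j3 -> j3 < m ->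
    2 <= (i1 != j1) + (i2 != j2) + (i3 != j3) ->
    ~~ affine_related (f i1) (f i2) (f i3) (f j1) (f j2) (f j3).

Variables (m : nat) (alpha : nat -> F).
Hypothesis alpha_adm : admissible m alpha.

Definition alpha_at (t : seq 'I_m) k := alpha (nth 0 (map val t) k).

Definition used_values := [set alpha i | i : 'I_m].

Definition fixed_excluded :=
  [set x | [exists d in setX (increasing_tuples m 2) (increasing_tuples m 2),
    (alpha_at d.1 0 != alpha_at d.2 0) &&
    affine_related (alpha_at d.1 0) (alpha_at d.1 1) x (alpha_at d.2 0) (alpha_at d.2 1) x]].

Definition src_excluded :=
  [set x | [exists d in setX (increasing_tuples m 2) (increasing_tuples m 3),
    affine_related (alpha_at d.1 0) (alpha_at d.1 1) x
                   (alpha_at d.2 0) (alpha_at d.2 1) (alpha_at d.2 2)]].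

Definition dst_excluded :=
  [set x | [exists d in setX (increasing_tuples m 3) (increasing_tuples m 2),
    affine_related (alpha_at d.1 0) (alpha_at d.1 1) (alpha_at d.1 2)
                   (alpha_at d.2 0) (alpha_at d.2 1) x]].

Definition excluded := used_values :|: fixed_excluded :|: src_excluded :|: dst_excluded.

Lemma alpha_at_neq01 k (t : k.-tuple 'I_m) : 1 < k -> t \in increasing_tuples m k ->
  alpha_at t 0 != alpha_at t 1.
Proof.
move=> k_gt1; rewrite inE /alpha_at; move: (size_tuple t) k_gt1.
case: (tval t) => [|i [|j s]] /= <- // _ /andP[lt_ij _].
by apply: contraTneq lt_ij => /alpha_adm.1 -> //; rewrite ltnn.
Qed.

Lemma card_fixed_excluded : #|fixed_excluded| <= 'C(m, 2) * 'C(m, 2).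
Proof.
rewrite -!card_increasing_tuples -cardsX card_witnessed_le //.
move=> [t u] x y; rewrite inE => /andP[t_incr _] /andP[tu0 rel_x] /andP[_ rel_y].
exact: affine_related_fixed_uniq (alpha_at_neq01 _ t_incr) tu0 rel_x rel_y.
Qed.

Lemma card_src_excluded : #|src_excluded| <= 'C(m, 2) * 'C(m, 3).
Proof.
rewrite -!card_increasing_tuples -cardsX card_witnessed_le //.
move=> [t u] x y; rewrite inE => /andP[t_incr _].
exact: affine_related_src_uniq (alpha_at_neq01 _ t_incr).
Qed.

Lemma card_dst_excluded : #|dst_excluded| <= 'C(m, 3) * 'C(m, 2).
Proof.
rewrite -!card_increasing_tuples -cardsX card_witnessed_le //.
move=> [t u] x y; rewrite inE => /andP[t_incr _].
exact: affine_related_dst_uniq (alpha_at_neq01 _ t_incr).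
Qed.

Lemma card_excluded :
  #|excluded| <= m + 'C(m, 2) * 'C(m, 2) + 'C(m, 2) * 'C(m, 3) + 'C(m, 3) * 'C(m, 2).
Proof.
have card_used : #|used_values| <= m by rewrite -[m]card_ord leq_imset_card.
apply: leq_trans (leq_card_setU _ _) (leq_add _ card_dst_excluded).
apply: leq_trans (leq_card_setU _ _) (leq_add _ card_src_excluded).
exact: leq_trans (leq_card_setU _ _) (leq_add card_used card_fixed_excluded).
Qed.

Lemma mem_fixed_excluded x i1 i2 j1 j2 : i1 < i2 < m -> j1 < j2 < m ->
  alpha i1 != alpha j1 ->
  affine_related (alpha i1) (alpha i2) x (alpha j1) (alpha j2) x -> x \in fixed_excluded.
Proof.
move=> /andP[lt_i12 lt_i2m] /andP[lt_j12 lt_j2m] ij1 rel_x; rewrite inE; apply/existsP.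
exists ([tuple Ordinal (ltn_trans lt_i12 lt_i2m); Ordinal lt_i2m],
        [tuple Ordinal (ltn_trans lt_j12 lt_j2m); Ordinal lt_j2m]).
by rewrite !inE /= lt_i12 lt_j12 ij1.
Qed.

Lemma mem_src_excluded x i1 i2 j1 j2 j3 : i1 < i2 < m -> j1 < j2 < j3 -> j3 < m ->
  affine_related (alpha i1) (alpha i2) x (alpha j1) (alpha j2) (alpha j3) ->
  x \in src_excluded.
Proof.
move=> /andP[lt_i12 lt_i2m] /andP[lt_j12 lt_j23] lt_j3m rel_x; rewrite inE; apply/existsP.
have lt_j2m := ltn_trans lt_j23 lt_j3m.
exists ([tuple Ordinal (ltn_trans lt_i12 lt_i2m); Ordinal lt_i2m],
        [tuple Ordinal (ltn_trans lt_j12 lt_j2m); Ordinal lt_j2m; Ordinal lt_j3m]).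
by rewrite !inE /= lt_i12 lt_j12 lt_j23.
Qed.

Lemma mem_dst_excluded x i1 i2 i3 j1 j2 : i1 < i2 < i3 -> i3 < m -> j1 < j2 < m ->
  affine_related (alpha i1) (alpha i2) (alpha i3) (alpha j1) (alpha j2) x ->
  x \in dst_excluded.
Proof.
move=> /andP[lt_i12 lt_i23] lt_i3m /andP[lt_j12 lt_j2m] rel_x; rewrite inE; apply/existsP.
have lt_i2m := ltn_trans lt_i23 lt_i3m.
exists ([tuple Ordinal (ltn_trans lt_i12 lt_i2m); Ordinal lt_i2m; Ordinal lt_i3m],
        [tuple Ordinal (ltn_trans lt_j12 lt_j2m); Ordinal lt_j2m]).
by rewrite !inE /= lt_i12 lt_i23 lt_j12.
Qed.

Lemma admissible_extend x : x \notin excluded -> admissible m.+1 [eta alpha with m |-> x].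
Proof.
rewrite !in_setU !negb_or => /andP[/andP[/andP[x_new x_fixed] x_src] x_dst].
set beta := [eta alpha with m |-> x].
have beta_new : beta m = x by rewrite /beta /= eqxx.
have beta_old k : k < m -> beta k = alpha k by rewrite /beta /= => /ltn_eqF ->.
have alpha_neq_x k : k < m -> alpha k <> x.
  by move=> lt_km alpha_k; apply: (negP x_new); apply/imsetP; exists (Ordinal lt_km).
have [alpha_inj alpha_free] := alpha_adm.
split=> [k l | i1 i2 i3 j1 j2 j3 lt_i123 le_i3m lt_j123 le_j3m].
  rewrite ltnS leq_eqVlt => /predU1P[-> | lt_km];
    rewrite ltnS leq_eqVlt => /predU1P[-> | lt_lm] //.
  - by rewrite beta_new beta_old // => /esym /alpha_neq_x.
  - by rewrite beta_new beta_old // => /alpha_neq_x.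
  - by rewrite !beta_old //; apply: alpha_inj.
have /andP[lt_i12 lt_i23] := lt_i123; have /andP[lt_j12 lt_j23] := lt_j123.
rewrite ltnS leq_eqVlt in le_i3m; rewrite ltnS leq_eqVlt in le_j3m.
have lt_i2m : i2 < m by case/predU1P: le_i3m => [<- | /(ltn_trans lt_i23)].
have lt_j2m : j2 < m by case/predU1P: le_j3m => [<- | /(ltn_trans lt_j23)].
have lt_i1m := ltn_trans lt_i12 lt_i2m; have lt_j1m := ltn_trans lt_j12 lt_j2m.
have lt_i12m : i1 < i2 < m by rewrite lt_i12.
have lt_j12m : j1 < j2 < m by rewrite lt_j12.
rewrite !(beta_old _ lt_i1m) !(beta_old _ lt_i2m) !(beta_old _ lt_j1m) !(beta_old _ lt_j2m).
case/predU1P: le_i3m => [-> | lt_i3m]; case/predU1P: le_j3m => [-> | lt_j3m] dist.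
- rewrite beta_new; apply: contra x_fixed; apply: mem_fixed_excluded => //.
  apply: contraTneq dist => /(alpha_inj _ _ lt_i1m lt_j1m) ->.
  by rewrite !eqxx; case: (i2 != j2).
- by rewrite beta_new beta_old //; apply: contra x_src; apply: mem_src_excluded.
- by rewrite beta_new beta_old //; apply: contra x_dst; apply: mem_dst_excluded.
- by rewrite !beta_old //; apply: alpha_free.
Qed.

End GreedyExtension.

Lemma exists_admissible (F : finFieldType) n :
  4 <= n -> n * (n - 1) ^ 2 * (n - 2) ^ 2 < 4 * #|F| ->
  forall m, m <= n -> exists alpha : nat -> F, admissible m alpha.
Proof.
move=> n_ge4 n_small; elim=> [_ | m IHm lt_mn]; first by exists (fun=> 0%R).
have [alpha alpha_adm] := IHm (ltnW lt_mn).
have := leq_ltn_trans (card_excluded alpha_adm) (count_excluded_lt n_ge4 lt_mn n_small).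
rewrite -(cardsC (excluded m alpha)) -{1}[#|excluded m alpha|]addn0 ltn_add2l.
case/card_gt0P => x; rewrite inE => x_allowed.
by exists [eta alpha with m |-> x]; apply: admissible_extend.
Qed.

Theorem lemma4p7 (F : finFieldType) (n : nat) :
  4 <= n ->
  n * (n - 1) ^ 2 * (n - 2) ^ 2 < 4 * #|F| ->
  exists alpha : 'I_n -> F,
    injective alpha /\
    forall i j : 'I_3 -> 'I_n,
      inS3 i -> inS3 j -> 2 <= dH i j ->
      ~ exists a b : F, (a != 0)%R /\
          forall l : 'I_3, (a * alpha (i l) + b = alpha (j l))%R.
Proof.
move=> n_ge4 n_small.
have [alpha [alpha_inj alpha_free]] := exists_admissible n_ge4 n_small (leqnn n).
exists (fun k : 'I_n => alpha k); split=> [k l /alpha_inj eq_kl | i j i_incr j_incr].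
  by apply: val_inj; apply: eq_kl.
rewrite /dH -sum1_card big_mkcond /= !big_ord_recl big_ord0 /= !inE /= addn0 addnA -!val_eqE.
move=> dist [a [b [a0 maps]]].
have incr3 (k : 'I_3 -> 'I_n) : inS3 k -> k ord0 < k (lift ord0 ord0) < k (lift ord0 (lift ord0 ord0)).
  by move=> k_incr; rewrite !k_incr.
move/negP: (alpha_free _ _ _ _ _ _ (incr3 i i_incr) (ltn_ord _) (incr3 j j_incr) (ltn_ord _) dist).
by apply; apply/affine_relatedP; exists a, b; rewrite !maps.
Qed.
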